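(* Let $E$ be a real affine space of dimension $n$ with a system of coordinates $(\ell_1,\dots,\ell_n)$, let $\alpha\in\mathbb R$ and $F=\{z\in E: z_1=\alpha\}$. (i) Let $k\in\{1,\dots,n\}$, let $A\subset F$ belong to the $\sigma$-algebra of subsets of $F$ generated by the restrictions to $F$ of $\ell_2,\dots,\ell_k$, and let $v,w\in\vec E$ satisfy $v_1=w_1=1$ and $(v_2,\dots,v_k)=(w_2,\dots,w_k)$. Then $A_v=A_w$. (ii) Let $\ell$ be an affine form on $E$ which is non-constant on $F$, let $A=F\cap\{\ell\ge 0\}$, and let $v,w\in\vec E$ satisfy $v_1=w_1=1$ and $\vec\ell(v)>\vec\ell(w)$. Then $A_v\subsetneq A_w$. (iii) With $\ell$ and $A=F\cap\{\ell\ge0\}$ as in (ii), let $(v^p)$ be a sequence in $\vec E$ with $v^p_1=1$ for all $p$ and $\vec\ell(v^p)\uparrow+\infty$. Then for every $\mu\in\mathcal M(E)$, $\lim_{p\to\infty}\mu(A_{v^p})=0$.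
   Context: $\vec E$ is the vector space associated with $E$; for an affine form $\ell$ on $E$, $\vec\ell$ is its associated linear form. A system of coordinates is a family $(\ell_1,\dots,\ell_n)$ of affine forms on $E$ such that $x\mapsto(\ell_1(x),\dots,\ell_n(x))$ is a bijection $E\to\mathbb R^n$; for $x\in E$ and $v\in\vec E$ one writes $x_i=\ell_i(x)$ and $v_i=\vec\ell_i(v)$. For $u\in\vec E$ with $u_1\neq 0$ and $A\subset F$, $A_u=\{x\in E: x_1\ge\alpha \text{ and } x-(x_1-\alpha)\frac{u}{u_1}\in A\}$ (the preimage of $A$ under the projection $F+\mathbb R_+u\to F$ along $u$, when $u_1>0$). $\mathcal M(E)$ is the set of finite non-negative Borel measures $\mu$ on $E$ such that $\mu(H)=0$ for every affine hyperplane $H$ of $E$. *)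

From HB Require Import structures.
From mathcomp Require Import all_boot all_algebra all_classical all_reals all_analysis.
From mathcomp Require Import matrix_normedtype.
Set Implicit Arguments. Unset Strict Implicit. Unset Printing Implicit Defensive.
Import GRing.Theory Num.Theory numFieldNormedType.Exports numFieldTopology.Exports.
Local Open Scope classical_set_scope.
Local Open Scope ring_scope.

(* The real affine space E of dimension n, modelled (after choice of an origin)
   by the vector space 'rV[R]_n, equipped with its Borel sigma-algebra
   (generated by the open sets of its canonical topology).  The associated
   vector space \vec E is 'rV[R]_n itself. *)
Definition Espace (R : realType) (n : nat) := g_sigma_algebraType (@open 'rV[R]_n).

Definition affine_form (R : realType) (n : nat) (l : Espace R n -> R) : Prop :=
  forall (x y : Espace R n) (t : R),
    l ((1 - t) *: x + t *: y) = (1 - t) * l x + t * l y.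

Definition lin_part (R : realType) (n : nat) (l : Espace R n -> R) (v : Espace R n) : R :=
  l v - l 0.

(* a system of coordinates (l_1, ..., l_n), indexed by 1..n *)
Definition coord_system (R : realType) (n : nat) (l : nat -> Espace R n -> R) : Prop :=
  (forall i, (1 <= i <= n)%N -> affine_form (l i)) /\
  bijective (fun x : Espace R n => \row_(i < n) l i.+1 x).

Definition Fset (R : realType) (n : nat) (l : nat -> Espace R n -> R) (alpha : R)
  : set (Espace R n) := [set z | l 1%N z = alpha].

Definition Aset (R : realType) (n : nat) (l : nat -> Espace R n -> R) (alpha : R)
  (A : set (Espace R n)) (u : Espace R n) : set (Espace R n) :=
  [set x | alpha <= l 1%N x /\
           A (x - ((l 1%N x - alpha) / lin_part (l 1%N) u) *: u)].

Definition gen_sigma_F (R : realType) (n : nat) (l : nat -> Espace R n -> R)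
  (alpha : R) (k : nat) : set (set (Espace R n)) :=
  <<s Fset l alpha,
      [set S | exists j (B : set R), [/\ (2 <= j <= k)%N, measurable B &
                 S = Fset l alpha `&` (l j) @^-1` B]] >>.

Definition affine_hyperplane (R : realType) (n : nat) (H : set (Espace R n)) : Prop :=
  exists h : Espace R n -> R,
    [/\ affine_form h, (exists x y, h x <> h y) & H = [set x | h x = 0]].

Definition nice_measure (R : realType) (n : nat)
  (mu : {finite_measure set Espace R n -> \bar R}) : Prop :=
  forall H, affine_hyperplane H -> mu H = 0%E.

From HB Require Import structures.
From mathcomp Require Import all_boot all_algebra all_classical all_reals all_analysis.
From mathcomp Require Import matrix_normedtype.
From mathcomp Require Import all_order ring lra.
Import Order.TTheory GRing.Theory Num.Theory.
Import numFieldNormedType.Exports numFieldTopology.Exports.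
Local Open Scope classical_set_scope.
Local Open Scope ring_scope.

(* When u_1 = 1, A_u consists of the points x with x_1 >= alpha whose
   projection x - (x_1 - alpha) u onto F along u lies in A, and every affine
   form f takes the value f x - (x_1 - alpha) \vec f(u) at that projection.
   (i) The subsets of F that are unions of fibres of (l_2, ..., l_k) form a
   sigma-algebra containing the generators, so A is such a union; the
   projections of x along v and along w lie in the same fibre.
   (ii) For A = F /\ {ell >= 0}, A_u is cut out by
   (x_1 - alpha) \vec ell(u) <= ell x, which shrinks as \vec ell(u) grows;
   if z is a zero of ell on F, then z + w lies in A_w but not in A_v.
   (iii) The sets A_{v^p} therefore decrease, and their intersection lies in
   the hyperplane F, which is mu-null. *)

Section AffineForm.
Context {R : realType} {n : nat} {f : Espace R n -> R} (hf : affine_form f).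

Lemma affine_formZ c (x : 'rV[R]_n) : f (c *: x) = (1 - c) * f 0 + c * f x.
Proof. by have := hf 0 x c; rewrite scaler0 add0r. Qed.

Lemma affine_formD (x y : 'rV[R]_n) : f (x + y) = f x + f y - f 0.
Proof.
have := hf (2 *: x) (2 *: y) 2^-1.
have -> : (1 - 2^-1 : R) = 2^-1 by field.
rewrite !scalerA mulVf ?pnatr_eq0 // !scale1r => ->.
by rewrite !affine_formZ; field.
Qed.

Lemma affine_formBZ c (x v : 'rV[R]_n) : f (x - c *: v) = f x - c * lin_part f v.
Proof. by rewrite -scaleNr affine_formD affine_formZ /lin_part; ring. Qed.

Lemma affine_form_coord (x : 'rV[R]_n) :
  f x = f 0 + \sum_(i < n) x 0 i * lin_part f (delta_mx 0 i).
Proof.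
rewrite {1}(row_sum_delta x); elim: (index_enum _) => [|i r IH].
  by rewrite !big_nil addr0.
by rewrite !big_cons affine_formD affine_formZ IH /lin_part; ring.
Qed.

Lemma affine_form_continuous : continuous (f : 'rV[R]_n -> R).
Proof.
have -> : (f : 'rV[R]_n -> R) =
    fun x => f 0 + \sum_(i < n) x 0 i * lin_part f (delta_mx 0 i).
  by apply: funext => x; exact: affine_form_coord.
have sum_cont : continuous (fun x : 'rV[R]_n =>
    \sum_(i < n) x 0 i * lin_part f (delta_mx 0 i)).
  apply: continuous_big; first exact: add_continuous.
  by move=> i _ x; exact: cvgM (@coord_continuous R 1 n 0 i x) (cvg_cst _).
by move=> x; exact: cvgD (cvg_cst _) (sum_cont x).
Qed.

Lemma measurable_affine_preimage (B : set R) :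
  closed B -> measurable (f @^-1` B : set (Espace R n)).
Proof.
move=> cB; rewrite -[_ @^-1` _]setCK; apply: measurableC; apply: sub_sigma_algebra.
apply: closed_openC; exact: (continuous_closedP _).1 affine_form_continuous B cB.
Qed.

Lemma affine_form_comb (g : Espace R n -> R) a c : affine_form g ->
  affine_form (fun x => f x - (g x - a) * c).
Proof. by move=> hg x y t; rewrite hf hg; ring. Qed.

End AffineForm.

Section Projection.
Context {R : realType} {n : nat} {l : nat -> Espace R n -> R} {alpha : R}.
Hypothesis hl1 : affine_form (l 1%N).

Definition Fproj (v x : Espace R n) : Espace R n := x - (l 1%N x - alpha) *: v.

Lemma Aset_unit A v : lin_part (l 1%N) v = 1 ->
  Aset l alpha A v = [set x | alpha <= l 1%N x /\ A (Fproj v x)].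
Proof. by move=> hv; apply/seteqP; split=> x; rewrite /Aset /= hv divr1. Qed.

Lemma Fset_Fproj v x : lin_part (l 1%N) v = 1 -> Fset l alpha (Fproj v x).
Proof. by move=> hv; rewrite /Fset /Fproj /= (affine_formBZ hl1) hv; ring. Qed.

Lemma measurable_Fset : measurable (Fset l alpha).
Proof. exact: measurable_affine_preimage hl1 _ (@closed_eq _ alpha). Qed.

Lemma Fset_affine_hyperplane : (0 < n)%N -> coord_system l ->
  affine_hyperplane (Fset l alpha).
Proof.
move=> hn [_ [g _ coord_g]].
have l1g r : l 1%N (g r) = r 0 (Ordinal hn).
  by have := congr1 (fun M : 'rV[R]_n => M 0 (Ordinal hn)) (coord_g r); rewrite mxE.
exists (fun x => l 1%N x - alpha); split.
- by move=> x y t; rewrite hl1; ring.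
- by exists (g 0), (g (const_mx 1)); rewrite !l1g !mxE; lra.
- by apply/seteqP; split=> x; rewrite /Fset /= => h; lra.
Qed.

Definition Fsaturated k (S : set (Espace R n)) : Prop :=
  forall y y', Fset l alpha y -> Fset l alpha y' ->
    (forall j, (2 <= j <= k)%N -> l j y = l j y') -> S y -> S y'.

Lemma gen_sigma_F_saturated k : gen_sigma_F l alpha k `<=` Fsaturated k.
Proof.
apply: smallest_sub.
  split.
  - by move=> y y' _ _ _.
  - move=> S satS y y' Fy Fy' e [_ nSy]; split=> // Sy'; apply: nSy.
    by apply: (satS y' y) => // j hj; rewrite e.
  - move=> S satS y y' Fy Fy' e [i _ Sy]; exists i => //.
    exact: (satS i) Fy Fy' e Sy.
move=> _ [j [B [hj _ ->]]] y y' Fy Fy' e [_ By]; split=> //.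
by rewrite /preimage /= -(e j hj).
Qed.

Lemma Aset_saturated_eq k A v w :
  (forall j, (2 <= j <= k)%N -> affine_form (l j)) -> Fsaturated k A ->
  lin_part (l 1%N) v = 1 -> lin_part (l 1%N) w = 1 ->
  (forall j, (2 <= j <= k)%N -> lin_part (l j) v = lin_part (l j) w) ->
  Aset l alpha A v = Aset l alpha A w.
Proof.
move=> affl satA.
suff incl u u' : lin_part (l 1%N) u = 1 -> lin_part (l 1%N) u' = 1 ->
    (forall j, (2 <= j <= k)%N -> lin_part (l j) u = lin_part (l j) u') ->
    Aset l alpha A u `<=` Aset l alpha A u'.
  move=> hv hw hvw; apply/seteqP; split; apply: incl => // j hj.
  by rewrite hvw.
move=> hu hu' e; rewrite !Aset_unit // => x [hx Ax]; split=> //.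
apply: (satA _ _ (Fset_Fproj _ _ hu) (Fset_Fproj _ _ hu')) Ax => j hj.
by rewrite /Fproj !(affine_formBZ (affl j hj)) e.
Qed.

Section HalfSpace.
Variable ell : Espace R n -> R.
Hypothesis hell : affine_form ell.

Let H := Fset l alpha `&` [set x | 0 <= ell x].

Lemma Aset_halfspace v : lin_part (l 1%N) v = 1 ->
  Aset l alpha H v =
  [set x | alpha <= l 1%N x /\ (l 1%N x - alpha) * lin_part ell v <= ell x].
Proof.
move=> hv; rewrite Aset_unit //; apply/seteqP; split=> x /= [hx Hx]; split=> //.
  by move: Hx => [_] /=; rewrite /Fproj (affine_formBZ hell) subr_ge0.
by split; [exact: Fset_Fproj | rewrite /= /Fproj (affine_formBZ hell) subr_ge0].
Qed.

Lemma Aset_halfspace_subset v w :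
  lin_part (l 1%N) v = 1 -> lin_part (l 1%N) w = 1 ->
  lin_part ell w <= lin_part ell v -> Aset l alpha H v `<=` Aset l alpha H w.
Proof.
move=> hv hw le_wv; rewrite !Aset_halfspace // => x [hx h]; split=> //.
by apply: le_trans h; rewrite ler_wpM2l // subr_ge0.
Qed.

Lemma Fset_root : (exists x y, Fset l alpha x /\ Fset l alpha y /\ ell x <> ell y) ->
  exists2 z, Fset l alpha z & ell z = 0.
Proof.
move=> [x [y [Fx [Fy /eqP/negPf ne_xy]]]].
have d_neq0 : ell x - ell y != 0 by rewrite subr_eq0 ne_xy.
pose s := ell x / (ell x - ell y).
exists ((1 - s) *: x + s *: y); last by rewrite hell /s; field.
by rewrite /Fset /= hl1 Fx Fy; ring.
Qed.

Lemma Aset_halfspace_proper v w :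
  (exists x y, Fset l alpha x /\ Fset l alpha y /\ ell x <> ell y) ->
  lin_part (l 1%N) v = 1 -> lin_part (l 1%N) w = 1 ->
  lin_part ell w < lin_part ell v -> Aset l alpha H v `<` Aset l alpha H w.
Proof.
move=> /Fset_root [z Fz ellz] hv hw lt_wv; split.
  exact: Aset_halfspace_subset (ltW lt_wv).
have l1zw : l 1%N (z + w) = alpha + 1.
  by rewrite (affine_formD hl1) Fz -hw /lin_part; ring.
have ellzw : ell (z + w) = lin_part ell w.
  by rewrite (affine_formD hell) ellz /lin_part; ring.
rewrite !Aset_halfspace // => /(_ (z + w)) /=; rewrite l1zw ellzw.
have -> : alpha + 1 - alpha = 1 :> R by ring.
by rewrite !mul1r lexx lerDl ler01 => /(_ (conj isT isT)) [_]; rewrite leNgt lt_wv.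
Qed.

Lemma measurable_Aset_halfspace v : lin_part (l 1%N) v = 1 ->
  measurable (Aset l alpha H v).
Proof.
move=> hv; rewrite Aset_halfspace //.
have -> : [set x | alpha <= l 1%N x /\ (l 1%N x - alpha) * lin_part ell v <= ell x] =
    l 1%N @^-1` [set y | alpha <= y] `&`
    (fun x => ell x - (l 1%N x - alpha) * lin_part ell v) @^-1` [set y | 0 <= y].
  by apply/seteqP; split=> x /= [hx h]; split; rewrite // ?subr_ge0 in h *.
apply: measurableI; first exact: measurable_affine_preimage hl1 _ (@closed_ge _ alpha).
have hcomb := affine_form_comb hell _ alpha (lin_part ell v) hl1.
exact: measurable_affine_preimage hcomb _ (@closed_ge _ 0).
Qed.

Lemma bigcap_Aset_halfspace (vp : nat -> Espace R n) :
  (forall p, lin_part (l 1%N) (vp p) = 1) ->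
  (forall c, exists p, c < lin_part ell (vp p)) ->
  \bigcap_p Aset l alpha H (vp p) `<=` Fset l alpha.
Proof.
move=> hvp unbounded x capx.
have := capx 0%N I; rewrite Aset_halfspace // => -[ge_x _].
apply/eqP; rewrite eq_le ge_x andbT leNgt; apply/negP => lt_x.
have t_gt0 : 0 < l 1%N x - alpha by rewrite subr_gt0.
have [p ltp] := unbounded (ell x / (l 1%N x - alpha)).
have := capx p I; rewrite Aset_halfspace // => -[_].
by rewrite mulrC -ler_pdivlMr // leNgt ltp.
Qed.

Lemma Aset_halfspace_measure_cvg0 (mu : {finite_measure set Espace R n -> \bar R})
    (vp : nat -> Espace R n) :
  mu (Fset l alpha) = 0%E ->
  (forall p, lin_part (l 1%N) (vp p) = 1) ->
  {homo (fun p => lin_part ell (vp p)) : p q / (p <= q)%N >-> p <= q} ->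
  (forall c, exists p, c < lin_part ell (vp p)) ->
  (fun p => mu (Aset l alpha H (vp p))) @ \oo --> 0%E.
Proof.
move=> muF hvp mono unbounded.
have mA p : measurable (Aset l alpha H (vp p)) by exact: measurable_Aset_halfspace.
have mcap : measurable (\bigcap_p Aset l alpha H (vp p)) by exact: bigcapT_measurable.
have <- : mu (\bigcap_p Aset l alpha H (vp p)) = 0%E.
  exact: subset_measure0 mcap measurable_Fset (bigcap_Aset_halfspace _ hvp unbounded) muF.
apply: nonincreasing_cvg_mu => //.
  by rewrite ltey_eq fin_num_measure.
move=> p q le_pq; apply/subsetPset.
exact: Aset_halfspace_subset (mono _ _ le_pq).
Qed.

End HalfSpace.
End Projection.

Theorem lemma8 (R : realType) (n : nat) (hn : (0 < n)%N)
  (l : nat -> Espace R n -> R) (hl : coord_system l) (alpha : R) :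
  (* (i) *)
  (forall (k : nat) (A : set (Espace R n)) (v w : Espace R n),
     (1 <= k <= n)%N ->
     A `<=` Fset l alpha -> gen_sigma_F l alpha k A ->
     lin_part (l 1%N) v = 1 -> lin_part (l 1%N) w = 1 ->
     (forall j, (2 <= j <= k)%N -> lin_part (l j) v = lin_part (l j) w) ->
     Aset l alpha A v = Aset l alpha A w) /\
  (* (ii) *)
  (forall (ell : Espace R n -> R) (v w : Espace R n),
     affine_form ell ->
     (exists x y, Fset l alpha x /\ Fset l alpha y /\ ell x <> ell y) ->
     lin_part (l 1%N) v = 1 -> lin_part (l 1%N) w = 1 ->
     lin_part ell v > lin_part ell w ->
     Aset l alpha (Fset l alpha `&` [set x | 0 <= ell x]) v `<`
     Aset l alpha (Fset l alpha `&` [set x | 0 <= ell x]) w) /\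
  (* (iii) *)
  (forall (ell : Espace R n -> R) (vp : nat -> Espace R n),
     affine_form ell ->
     (exists x y, Fset l alpha x /\ Fset l alpha y /\ ell x <> ell y) ->
     (forall p, lin_part (l 1%N) (vp p) = 1) ->
     {homo (fun p => lin_part ell (vp p)) : p q / (p <= q)%N >-> p <= q} ->
     (fun p => lin_part ell (vp p)) @ \oo --> +oo ->
     forall mu : {finite_measure set Espace R n -> \bar R},
       nice_measure mu ->
       (fun p => mu (Aset l alpha (Fset l alpha `&` [set x | 0 <= ell x]) (vp p)))
         @ \oo --> 0%E).
Proof.
have [affl _] := hl.
have hl1 : affine_form (l 1%N) by exact: affl.
split.
  move=> k A v w /andP[_ le_kn] _ /gen_sigma_F_saturated satA.
  have affl_k j : (2 <= j <= k)%N -> affine_form (l j).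
    move=> /andP[le2j le_jk]; apply: affl.
    by rewrite (leq_trans _ le2j) // (leq_trans le_jk).
  exact: Aset_saturated_eq hl1 _ _ _ _ affl_k satA.
split.
  by move=> ell v w hell; exact: Aset_halfspace_proper.
move=> ell vp hell _ hvp mono to_infty mu nice_mu.
apply: Aset_halfspace_measure_cvg0 => //.
  exact/nice_mu/Fset_affine_hyperplane.
by move=> c; have [N _ /(_ N (leqnn N)) ltN] := (cvgryPgt _).1 to_infty c; exists N.
Qed.
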